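(* Let $(X,d)$ be a complete metric space and let $\{T_i\}_{i\in\mathbb{N}}$ be a sequence of continuous maps $T_i:X\to X$, where each $T_i$ is a $\phi$-contraction with comparison function $\phi_i$ satisfying $\phi_i(t)<t$ for all $t>0$. Suppose there is $x_0\in X$ with $\sup_{i\in\mathbb{N}} d(T_i(x_0),x_0)<\infty$, and that $$\sum_{k=1}^{\infty}\phi_1\circ\phi_2\circ\cdots\circ\phi_k(t)<\infty\quad\text{for every } t>0.$$ Then there is a point $\bar x\in X$ such that for every initial point $x\in X$ the backward trajectory $\Psi_k(x)=T_1\circ T_2\circ\cdots\circ T_k(x)$ converges to $\bar x$ as $k\to\infty$.
   Context: A comparison function is a non-decreasing map $\phi:[0,\infty)\to[0,\infty)$ such that $\phi^p(t)\to 0$ as $p\to\infty$ for every $t\ge 0$, where $\phi^p$ denotes the $p$-fold composition of $\phi$. A map $T:X\to X$ is a $\phi$-contraction with comparison function $\phi$ if $d(T(x),T(y))\le\phi(d(x,y))$ for all $x,y\in X$. *)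

From Stdlib Require Import Reals.
From Coquelicot Require Import Coquelicot.
Open Scope R_scope.

Definition is_metric {X : Type} (d : X -> X -> R) : Prop :=
  (forall x y, 0 <= d x y) /\
  (forall x y, d x y = 0 <-> x = y) /\
  (forall x y, d x y = d y x) /\
  (forall x y z, d x z <= d x y + d y z).

Definition cauchy_seq {X : Type} (d : X -> X -> R) (u : nat -> X) : Prop :=
  forall eps, 0 < eps -> exists N, forall m n, (N <= m)%nat -> (N <= n)%nat ->
    d (u m) (u n) < eps.

Definition seq_converges_to {X : Type} (d : X -> X -> R) (u : nat -> X) (l : X) : Prop :=
  forall eps, 0 < eps -> exists N, forall n, (N <= n)%nat -> d (u n) l < eps.

Definition complete_metric {X : Type} (d : X -> X -> R) : Prop :=
  is_metric d /\
  forall u : nat -> X, cauchy_seq d u -> exists l, seq_converges_to d u l.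

Definition metric_continuous {X : Type} (d : X -> X -> R) (T : X -> X) : Prop :=
  forall x eps, 0 < eps -> exists delta, 0 < delta /\
    forall y, d x y < delta -> d (T x) (T y) < eps.

(* Comparison function phi : [0,oo) -> [0,oo), represented as R -> R with all
   requirements imposed on [0,oo) only. *)
Definition comparison_function (phi : R -> R) : Prop :=
  (forall t, 0 <= t -> 0 <= phi t) /\
  (forall s t, 0 <= s -> s <= t -> phi s <= phi t) /\
  (forall t, 0 <= t -> is_lim_seq (fun p => Rbar.Finite (Nat.iter p phi t)) 0).

Definition phi_contraction {X : Type} (d : X -> X -> R) (phi : R -> R) (T : X -> X) : Prop :=
  comparison_function phi /\ forall x y, d (T x) (T y) <= phi (d x y).

(* comp_first f k = f 0 o f 1 o ... o f (k-1)  (identity for k = 0). *)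
Fixpoint comp_first {A : Type} (f : nat -> A -> A) (k : nat) : A -> A :=
  match k with
  | O => fun x => x
  | S k' => fun x => comp_first f k' (f k' x)
  end.

(* The backward trajectory Psi_k = T_1 o ... o T_k satisfies
   d(Psi_k x, Psi_k y) <= Phi_k(d(x, y)) with Phi_k = phi_1 o ... o phi_k.
   Since Psi_(k+1) x0 = Psi_k (T_(k+1) x0) and d(T_i x0, x0) <= M, consecutive
   terms of (Psi_k x0) are at distance at most Phi_k(M), which is summable, so
   (Psi_k x0) is Cauchy and converges to some xbar.  For any other x,
   d(Psi_k x, Psi_k x0) <= Phi_k(d(x, x0)) tends to 0, being the general term of
   a convergent series, so Psi_k x converges to the same xbar. *)

From Stdlib Require Import Reals Lra Lia.
From Coquelicot Require Import Coquelicot.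
Open Scope R_scope.

Section Metric.

Variables (X : Type) (d : X -> X -> R).
Hypothesis d_metric : is_metric d.

Lemma dist_ge0 x y : 0 <= d x y.
Proof. apply d_metric. Qed.

Lemma dist_xx x : d x x = 0.
Proof. apply (proj1 (proj2 d_metric)); reflexivity. Qed.

Lemma dist_sym x y : d x y = d y x.
Proof. apply d_metric. Qed.

Lemma dist_triangle x y z : d x z <= d x y + d y z.
Proof. apply d_metric. Qed.

Lemma dist_le_sum_steps (v : nat -> X) (b : nat -> R) :
  (forall k, d (v k) (v (S k)) <= b k) ->
  forall m n, (m <= n)%nat -> d (v m) (v (S n)) <= sum_n_m b m n.
Proof.
  intros Hstep m n Hmn; induction Hmn as [|n Hmn IH].
  - rewrite sum_n_n; apply Hstep.
  - rewrite sum_n_Sm by lia.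
    apply Rle_trans with (d (v m) (v (S n)) + d (v (S n)) (v (S (S n)))).
    + apply dist_triangle.
    + change (plus (sum_n_m b m n) (b (S n))) with (sum_n_m b m n + b (S n)).
      apply Rplus_le_compat; [exact IH | apply Hstep].
Qed.

Lemma cauchy_of_summable_steps (v : nat -> X) (b : nat -> R) :
  (forall k, d (v k) (v (S k)) <= b k) -> ex_series b -> cauchy_seq d v.
Proof.
  intros Hstep Hb eps Heps.
  destruct (Cauchy_ex_series b Hb (mkposreal eps Heps)) as [N HN].
  assert (Hlt : forall m n, (N <= m)%nat -> (m < n)%nat -> d (v m) (v n) < eps).
  { intros m [|n] Hm Hmn; [lia|].
    eapply Rle_lt_trans; [apply dist_le_sum_steps; [exact Hstep | lia]|].
    eapply Rle_lt_trans; [apply Rle_abs|].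
    apply (HN m n); lia. }
  exists N; intros m n Hm Hn.
  destruct (Nat.lt_total m n) as [Hmn | [-> | Hnm]].
  - now apply Hlt.
  - rewrite dist_xx; exact Heps.
  - rewrite dist_sym; now apply Hlt.
Qed.

Lemma seq_converges_to_of_dist_lim_0 (u w : nat -> X) (l : X) :
  seq_converges_to d w l -> is_lim_seq (fun n => d (u n) (w n)) 0 ->
  seq_converges_to d u l.
Proof.
  intros Hw Huw eps Heps.
  apply is_lim_seq_spec in Huw.
  destruct (Huw (pos_div_2 (mkposreal eps Heps))) as [N1 HN1].
  destruct (Hw (eps / 2)) as [N2 HN2]; [lra|].
  exists (N1 + N2)%nat; intros n Hn.
  specialize (HN1 n ltac:(lia)); specialize (HN2 n ltac:(lia)); simpl in HN1.
  rewrite Rminus_0_r in HN1.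
  apply Rle_lt_trans with (d (u n) (w n) + d (w n) l); [apply dist_triangle|].
  apply Rle_lt_trans with (Rabs (d (u n) (w n)) + d (w n) l); [|lra].
  apply Rplus_le_compat_r, Rle_abs.
Qed.

End Metric.

Section Composition.

Variable phi : nat -> R -> R.
Hypothesis phi_ge0 : forall i t, 0 <= t -> 0 <= phi i t.
Hypothesis phi_mono : forall i s t, 0 <= s -> s <= t -> phi i s <= phi i t.

Lemma comp_first_ge0 k t : 0 <= t -> 0 <= comp_first phi k t.
Proof.
  revert t; induction k as [|k IH]; intros t Ht; simpl; auto.
Qed.

Lemma comp_first_mono k s t :
  0 <= s -> s <= t -> comp_first phi k s <= comp_first phi k t.
Proof.
  revert s t; induction k as [|k IH]; intros s t Hs Hst; simpl; auto.
Qed.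

Lemma ex_series_comp_first :
  (forall t, 0 < t -> ex_series (fun k => comp_first phi (S k) t)) ->
  forall t, 0 <= t -> ex_series (fun k => comp_first phi k t).
Proof.
  intros Hser t Ht.
  apply ex_series_incr_1.
  apply (@ex_series_le R_AbsRing R_CompleteNormedModule _
           (fun k => comp_first phi (S k) (t + 1))).
  - intro k; change (Rabs (comp_first phi (S k) t) <= comp_first phi (S k) (t + 1)).
    rewrite Rabs_pos_eq by (apply comp_first_ge0; auto).
    apply comp_first_mono; lra.
  - apply Hser; lra.
Qed.

Variables (X : Type) (d : X -> X -> R) (T : nat -> X -> X).
Hypothesis T_contr : forall i x y, d (T i x) (T i y) <= phi i (d x y).
Hypothesis d_metric : is_metric d.

Lemma comp_first_contraction k x y :
  d (comp_first T k x) (comp_first T k y) <= comp_first phi k (d x y).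
Proof.
  revert x y; induction k as [|k IH]; intros x y; simpl; [lra|].
  eapply Rle_trans; [apply IH|].
  apply comp_first_mono; [apply dist_ge0, d_metric | apply T_contr].
Qed.

Lemma dist_comp_first_step x0 M k :
  (forall i, d (T i x0) x0 <= M) ->
  d (comp_first T k x0) (comp_first T (S k) x0) <= comp_first phi k M.
Proof.
  intro HM; change (comp_first T (S k) x0) with (comp_first T k (T k x0)).
  eapply Rle_trans; [apply comp_first_contraction|].
  apply comp_first_mono; [apply dist_ge0, d_metric|].
  rewrite dist_sym by exact d_metric; apply HM.
Qed.

End Composition.

(* Indexing: T i, phi i (i : nat, from 0) stand for the paper's T_(i+1), phi_(i+1). *)
Theorem proposition3p11 (X : Type) (d : X -> X -> R)
  (T : nat -> X -> X) (phi : nat -> R -> R) :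
  complete_metric d ->
  (forall i, metric_continuous d (T i)) ->
  (forall i, phi_contraction d (phi i) (T i)) ->
  (forall i t, 0 < t -> phi i t < t) ->
  (exists x0 : X, exists M : R, forall i, d (T i x0) x0 <= M) ->
  (forall t, 0 < t -> ex_series (fun k => comp_first phi (S k) t)) ->
  exists xbar : X, forall x : X,
    seq_converges_to d (fun k => comp_first T k x) xbar.
Proof.
  intros [Hm Hcomplete] _ Hcontr _ [x0 [M HM]] Hser.
  assert (phi_ge0 : forall i t, 0 <= t -> 0 <= phi i t)
    by (intros i; apply (Hcontr i)).
  assert (phi_mono : forall i s t, 0 <= s -> s <= t -> phi i s <= phi i t)
    by (intros i; apply (Hcontr i)).
  assert (T_contr : forall i x y, d (T i x) (T i y) <= phi i (d x y))
    by (intros i; apply (Hcontr i)).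
  pose proof (ex_series_comp_first phi phi_ge0 phi_mono Hser) as Hsum.
  destruct (Hcomplete (fun k => comp_first T k x0)) as [xbar Hxbar].
  { apply (cauchy_of_summable_steps X d Hm _ (fun k => comp_first phi k M)).
    - intro k; now apply dist_comp_first_step.
    - apply Hsum, Rle_trans with (d (T 0%nat x0) x0); [apply (dist_ge0 X d Hm) | apply HM]. }
  exists xbar; intro x.
  apply (seq_converges_to_of_dist_lim_0 X d Hm _ _ _ Hxbar).
  apply is_lim_seq_le_le with (fun _ => 0) (fun k => comp_first phi k (d x x0)).
  - intro k; split; [apply (dist_ge0 X d Hm) | now apply comp_first_contraction].
  - apply is_lim_seq_const.
  - apply ex_series_lim_0, Hsum, (dist_ge0 X d Hm).
Qed.
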